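(* Let $\lambda_1<\dots<\lambda_k$ be real, $I=(i_1,\dots,i_k)$ positive integers with sum $n$, and $\Lambda$ the diagonal matrix with $\lambda_j$ appearing $i_j$ times, in increasing order. Let $\xi_I$ be the vector field on ${\rm Fl}_I(\mathbb R)={\rm SO}(n,\mathbb R)/G$, $G={\rm SO}(n,\mathbb R)\cap({\rm O}(i_1)\times\dots\times{\rm O}(i_k))$, induced by the right-$G$-invariant vector field $M(\Psi)=\big((\Psi\Lambda\Psi^{-1})_+-(\Psi\Lambda\Psi^{-1})_-\big)\Psi$ on ${\rm SO}(n,\mathbb R)$. Then the singular points (zeros) of $\xi_I$ are indexed by the multiset permutations $S_n^I$: they are exactly the cosets $[\Psi]$ for which $\Psi\Lambda\Psi^{-1}$ is diagonal, and $\tau\in S_n^I$ corresponds to the coset $[\Psi]$ with $\Psi\Lambda\Psi^{-1}=\operatorname{diag}(\lambda_{\tau(1)},\dots,\lambda_{\tau(n)})$.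
   Context: For a square matrix $X$, $X_+$ (resp. $X_-$) is its strictly upper (resp. strictly lower) triangular part. $S_n^I$ is the set of surjective maps $\tau\colon\{1,\dots,n\}\to\{1,\dots,k\}$ with $|\tau^{-1}(j)|=i_j$ for all $j$. The coset $[\Psi]\in{\rm SO}(n,\mathbb R)/G$ determines the matrix $\Psi\Lambda\Psi^{-1}$ uniquely. *)

From HB Require Import structures.
From mathcomp Require Import all_boot all_order all_algebra.
From mathcomp Require Import reals.
Set Implicit Arguments. Unset Strict Implicit. Unset Printing Implicit Defensive.
Import Order.TTheory GRing.Theory Num.Theory.
Local Open Scope ring_scope.

Section Defs.
Variable R : realType.

Definition is_SO (n : nat) (Psi : 'M[R]_n) : Prop :=
  Psi *m Psi^T = 1%:M /\ \det Psi = 1.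

Definition mx_supper (n : nat) (X : 'M[R]_n) : 'M[R]_n :=
  \matrix_(p, q) (if (p < q)%N then X p q else 0).
Definition mx_slower (n : nat) (X : 'M[R]_n) : 'M[R]_n :=
  \matrix_(p, q) (if (q < p)%N then X p q else 0).

Definition Lambda_seq (k : nat) (i : 'I_k -> nat) (lam : 'I_k -> R) : seq R :=
  flatten [seq nseq (i j) (lam j) | j <- enum 'I_k].

Definition LambdaI (n k : nat) (i : 'I_k -> nat) (lam : 'I_k -> R) : 'M[R]_n :=
  diag_mx (\row_(p < n) nth 0 (Lambda_seq i lam) p).

Definition block_labels (k : nat) (i : 'I_k -> nat) : seq nat :=
  flatten [seq nseq (i j) (val j) | j <- enum 'I_k].

Definition block_diag (n k : nat) (i : 'I_k -> nat) (X : 'M[R]_n) : Prop :=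
  forall p q : 'I_n,
    nth 0%N (block_labels i) p != nth 0%N (block_labels i) q -> X p q = 0.

Definition in_G (n k : nat) (i : 'I_k -> nat) (g : 'M[R]_n) : Prop :=
  is_SO g /\ block_diag i g.

Definition in_lieG (n k : nat) (i : 'I_k -> nat) (X : 'M[R]_n) : Prop :=
  X^T = - X /\ block_diag i X.

Definition same_coset (n k : nat) (i : 'I_k -> nat) (Psi Psi' : 'M[R]_n) : Prop :=
  in_G i (invmx Psi *m Psi').

Definition toda_field (n : nat) (Lam Psi : 'M[R]_n) : 'M[R]_n :=
  let L := Psi *m Lam *m invmx Psi in (mx_supper L - mx_slower L) *m Psi.

(* the induced vector field xi_I on SO(n)/G vanishes at [Psi] iff M(Psi)
   lies in the kernel of d pi at Psi, i.e. the tangent space Psi * Lie(G)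
   of the fibre Psi G *)
Definition xi_zero (n k : nat) (i : 'I_k -> nat) (lam : 'I_k -> R)
  (Psi : 'M[R]_n) : Prop :=
  exists X : 'M[R]_n, in_lieG i X /\ toda_field (LambdaI n i lam) Psi = Psi *m X.

Definition is_SnI (n k : nat) (i : 'I_k -> nat) (tau : {ffun 'I_n -> 'I_k}) : Prop :=
  (forall j : 'I_k, exists p : 'I_n, tau p = j) /\
  (forall j : 'I_k, #|[pred p | tau p == j]| = i j).

Definition diag_tau (n k : nat) (lam : 'I_k -> R) (tau : {ffun 'I_n -> 'I_k})
  : 'M[R]_n := diag_mx (\row_(p < n) lam (tau p)).

End Defs.

(* If [Psi] is a zero of xi_I, then M(Psi) = Psi X with X in Lie(G); as X commutes
   with Lambda, the skew part B = L_+ - L_- of the symmetric matrix L = Psi Lambda Psi^T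
   commutes with L.  The p-th diagonal entry of [B, L] is twice the sum of the squares
   of the entries of row p right of the diagonal minus those left of it, so induction
   on p shows that L is diagonal.  Conversely, if L is diagonal, orthogonality of Psi
   forces its diagonal entries to be values lam (tau p), with the multiplicities of
   Lambda (conjugate spectral projections have equal traces); every such tau is reached
   by a signed permutation matrix, and two realizations differ by a matrix commuting
   with Lambda, i.e. by an element of G. *)

From HB Require Import structures.
From mathcomp Require Import all_boot all_order all_algebra perm.
From mathcomp Require Import reals ring.
Import Order.TTheory GRing.Theory Num.Theory.
Local Open Scope ring_scope.
Set Implicit Arguments. Unset Strict Implicit. Unset Printing Implicit Defensive.

Lemma card_fibreE (n : nat) (T : eqType) (f : 'I_n -> T) (x : T) :
  #|[pred p | f p == x]| = count_mem x [seq f p | p <- enum 'I_n].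
Proof. by rewrite cardE size_filter -enumT count_map. Qed.

Lemma perm_of_card_fibres (n : nat) (T : eqType) (f g : 'I_n -> T) :
  (forall x, #|[pred p | f p == x]| = #|[pred p | g p == x]|) ->
  exists s : 'S_n, forall p, f p = g (s p).
Proof.
move=> eq_fibres.
have /tuple_permP [s eq_fg] : perm_eq [seq f p | p <- enum 'I_n]
                                     (map_tuple g (ord_tuple n)).
  by apply/allP => x _; rewrite /= -!card_fibreE eq_fibres.
exists s => p; have := congr1 (fun r => nth (f p) r p) eq_fg.
rewrite nth_mktuple tnth_map tnth_ord_tuple (nth_map p) ?size_enum_ord //.
by rewrite nth_ord_enum.
Qed.

Section BlockLabels.
Variables (n k : nat) (i : 'I_k -> nat).
Hypothesis size_labels : size (block_labels i) = n.

Lemma size_block_labels : size (block_labels i) = (\sum_(j < k) i j)%N.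
Proof.
rewrite /block_labels size_flatten /shape -map_comp sumnE big_map big_enum /=.
by apply: eq_bigr => j _; rewrite /= size_nseq.
Qed.

Lemma count_block_labels (j : 'I_k) : count_mem (val j) (block_labels i) = i j.
Proof.
rewrite /block_labels count_flatten sumnE -map_comp big_map big_enum /=.
rewrite (bigD1 j) //= count_nseq /= eqxx mul1n big1 ?addn0 // => j' neq_j'j.
by rewrite count_nseq /= (inj_eq val_inj) (negbTE neq_j'j).
Qed.

Lemma block_label_lt (p : 'I_n) : (nth 0%N (block_labels i) p < k)%N.
Proof.
have : nth 0%N (block_labels i) p \in block_labels i by apply: mem_nth; rewrite size_labels.
case/flattenP => s /mapP [j _ ->]; rewrite mem_nseq => /andP [_ /eqP ->].
exact: ltn_ord.
Qed.

Definition block_of : {ffun 'I_n -> 'I_k} := [ffun p => Ordinal (block_label_lt p)].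

Lemma val_block_of (p : 'I_n) : val (block_of p) = nth 0%N (block_labels i) p.
Proof. by rewrite ffunE. Qed.

Lemma block_labels_block_of :
  block_labels i = [seq val (block_of p) | p <- enum 'I_n].
Proof.
rewrite (eq_map val_block_of) (map_comp (nth 0%N _) val) val_enum_ord.
by rewrite map_nth_iota0 -size_labels ?take_size.
Qed.

Lemma card_block_of (j : 'I_k) : #|[pred p | block_of p == j]| = i j.
Proof.
rewrite card_fibreE -count_block_labels block_labels_block_of !count_map.
by apply: eq_count => p; rewrite /= (inj_eq val_inj).
Qed.

Lemma block_diagE (R : realType) (X : 'M[R]_n) :
  block_diag i X <-> forall p q, block_of p != block_of q -> X p q = 0.
Proof.
rewrite /block_diag; split=> bdX p q; have := bdX p q.
all: by rewrite -(inj_eq val_inj) !val_block_of.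
Qed.

Lemma LambdaI_block_of (R : realType) (lam : 'I_k -> R) :
  LambdaI n i lam = diag_tau lam block_of.
Proof.
rewrite /LambdaI /diag_tau; congr diag_mx; apply/rowP => p; rewrite !mxE.
have -> : Lambda_seq i lam = [seq odflt 0 (omap lam (insub m)) | m <- block_labels i].
  rewrite /Lambda_seq /block_labels map_flatten -map_comp; congr flatten.
  by apply: eq_map => j /=; rewrite map_nseq /= valK.
by rewrite (nth_map 0%N) ?size_labels // -val_block_of valK.
Qed.

End BlockLabels.

Lemma diag_mx_intertwineP (R : idomainType) (n : nat) (a b : 'rV[R]_n) (X : 'M[R]_n) :
  diag_mx a *m X = X *m diag_mx b <-> forall p q, a 0 p != b 0 q -> X p q = 0.
Proof.
rewrite mul_diag_mx mul_mx_diag; split=> [/matrixP eqX p q neq_ab | X0].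
  have := eqX p q; rewrite !mxE => eq_pq.
  have /eqP : X p q * (a 0 p - b 0 q) = 0 by rewrite mulrBr [X p q * _]mulrC eq_pq subrr.
  by rewrite mulf_eq0 subr_eq0 (negbTE neq_ab) orbF => /eqP.
apply/matrixP => p q; rewrite !mxE.
by have [->|/X0->] := eqVneq (a 0 p) (b 0 q); [rewrite mulrC | rewrite mulr0 mul0r].
Qed.

Lemma orthogonal_conj_diagP (R : comUnitRingType) (n : nat) (a b : 'rV[R]_n)
    (Psi : 'M[R]_n) : Psi *m Psi^T = 1%:M ->
  Psi *m diag_mx b *m Psi^T = diag_mx a <-> diag_mx a *m Psi = Psi *m diag_mx b.
Proof.
move=> orthPsi; have orthPsiT := mulmx1C orthPsi.
split=> [<- | intertwine]; first by rewrite -mulmxA orthPsiT mulmx1.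
by rewrite -intertwine -mulmxA orthPsi mulmx1.
Qed.

Lemma mxtrace_fibre (R : nzSemiRingType) (n : nat) (T : eqType) (f : 'I_n -> T) (x : T) :
  \tr (diag_mx (\row_p (f p == x)%:R) : 'M[R]_n) = #|[pred p | f p == x]|%:R.
Proof.
rewrite mxtrace_diag -sum1_card natr_sum [RHS]big_mkcond /=.
by apply: eq_bigr => p _; rewrite mxE inE; case: (f p == x).
Qed.

Lemma SO_invmx (R : realType) (n : nat) (Psi : 'M[R]_n) : is_SO Psi -> invmx Psi = Psi^T.
Proof.
case=> orthPsi detPsi; have unitPsi : Psi \in unitmx by rewrite unitmxE detPsi unitr1.
by rewrite -[invmx Psi]mulmx1 -orthPsi mulmxA mulVmx // mul1mx.
Qed.

Lemma SO_trmx (R : realType) (n : nat) (Psi : 'M[R]_n) : is_SO Psi -> is_SO Psi^T.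
Proof. by case=> orthPsi detPsi; split; rewrite ?det_tr // trmxK mulmx1C. Qed.

Lemma SO_mul (R : realType) (n : nat) (Psi Phi : 'M[R]_n) :
  is_SO Psi -> is_SO Phi -> is_SO (Psi *m Phi).
Proof.
case=> orthPsi detPsi [orthPhi detPhi]; split; last by rewrite det_mulmx detPsi detPhi mulr1.
by rewrite trmx_mul mulmxA -[Psi *m Phi *m _]mulmxA orthPhi mulmx1.
Qed.

Section DiagTau.
Variables (R : realType) (n k : nat) (lam : 'I_k -> R).

Lemma diag_tau_conj_diag (Psi : 'M[R]_n) (s : {ffun 'I_n -> 'I_k}) (d : 'rV[R]_n) :
  Psi *m Psi^T = 1%:M -> Psi *m diag_tau lam s *m Psi^T = diag_mx d ->
  exists t : {ffun 'I_n -> 'I_k}, diag_mx d = diag_tau lam t.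
Proof.
move=> orthPsi /(orthogonal_conj_diagP _ _ orthPsi)/diag_mx_intertwineP supp.
have row_nz p : exists q, Psi p q != 0.
  apply/existsP/negbNE/negP => /existsPn row0.
  have /matrixP/(_ p p) := orthPsi; rewrite !mxE eqxx /= big1 => [/eqP|q _].
    by rewrite eq_sym oner_eq0.
  by rewrite mxE (eqP (negPn (row0 q))) mul0r.
pose q_of p := xchoose (row_nz p).
exists [ffun p => s (q_of p)]; congr diag_mx; apply/rowP => p; rewrite !mxE ffunE.
apply: contraNeq (xchooseP (row_nz p)) => neq_p; apply/eqP/supp.
by rewrite mxE.
Qed.

Hypothesis lam_inj : injective lam.

Lemma diag_tau_inj (s t : {ffun 'I_n -> 'I_k}) : diag_tau lam s = diag_tau lam t -> s = t.
Proof.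
move=> /matrixP eq_st; apply/ffunP => p; apply: lam_inj.
by have := eq_st p p; rewrite !mxE eqxx !mulr1n.
Qed.

Lemma diag_tau_commuteP (t : {ffun 'I_n -> 'I_k}) (X : 'M[R]_n) :
  diag_tau lam t *m X = X *m diag_tau lam t <-> forall p q, t p != t q -> X p q = 0.
Proof.
rewrite diag_mx_intertwineP.
by split=> X0 p q; have := X0 p q; rewrite !mxE (inj_eq lam_inj).
Qed.

Lemma card_fibre_conj_diag_tau (Psi : 'M[R]_n) (s t : {ffun 'I_n -> 'I_k}) (j : 'I_k) :
  Psi *m Psi^T = 1%:M -> Psi *m diag_tau lam s *m Psi^T = diag_tau lam t ->
  #|[pred p | t p == j]| = #|[pred p | s p == j]|.
Proof.
move=> orthPsi /(orthogonal_conj_diagP _ _ orthPsi)/diag_mx_intertwineP supp.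
pose E (f : {ffun 'I_n -> 'I_k}) : 'M[R]_n := diag_mx (\row_p (f p == j)%:R).
have : Psi *m E s *m Psi^T = E t.
  apply/(orthogonal_conj_diagP _ _ orthPsi)/diag_mx_intertwineP => p q.
  rewrite !mxE => neq_pq; apply: supp; rewrite !mxE; apply: contraNneq neq_pq.
  by move/lam_inj ->.
move=> /(congr1 mxtrace); rewrite mxtrace_mulC mulmxA (mulmx1C orthPsi) mul1mx.
by rewrite !mxtrace_fibre => /eqP; rewrite eqr_nat => /eqP.
Qed.

End DiagTau.

Lemma perm_mx_orthogonal (R : pzRingType) (n : nat) (s : 'S_n) :
  perm_mx s *m (perm_mx s)^T = 1%:M :> 'M[R]_n.
Proof. by rewrite tr_perm_mx -perm_mxM mulgV perm_mx1. Qed.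

Lemma SO_conj_diag_perm (R : realType) (n : nat) (s : 'S_n) (e : 'rV[R]_n) :
  exists Psi : 'M[R]_n, is_SO Psi /\ Psi *m diag_mx e *m Psi^T = diag_mx (\row_p e 0 (s p)).
Proof.
(* Flipping the sign of the first row compensates the signature of s. *)
pose c := \row_(p < n) (if val p == 0%N then (-1) ^+ odd_perm s else 1 : R).
have c2 p : c 0 p * c 0 p = 1 by rewrite mxE; case: ifP; rewrite ?mulr1 // -expr2 sqrr_sign.
have det_c : \prod_p c 0 p = (-1) ^+ odd_perm s.
  under eq_bigr do rewrite mxE.
  clear c c2; case: n s e => [|n] s _.
    by rewrite big_ord0 (_ : s = 1%g) ?odd_perm1 //; apply/permP => -[].
  by rewrite big_ord_recl big1 ?mulr1.
pose Psi := diag_mx c *m perm_mx s.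
have orthPsi : Psi *m Psi^T = 1%:M.
  rewrite trmx_mul tr_diag_mx mulmxA -[_ *m perm_mx s *m _]mulmxA perm_mx_orthogonal.
  rewrite mulmx1 mulmx_diag -diag_const_mx; congr diag_mx.
  by apply/rowP => p; rewrite [LHS]mxE c2 mxE.
exists Psi; split.
  by split; rewrite // det_mulmx det_diag det_perm det_c -signr_addb addbb.
apply/(orthogonal_conj_diagP _ _ orthPsi)/matrixP => p q.
rewrite mul_diag_mx mul_mx_diag /Psi !mul_diag_mx !mxE.
by have [<-|] := eqVneq (s p) q; rewrite ?mulr1n ?mulr0n ?mulr0 ?mul0r // mulrC.
Qed.

Section TodaBracket.
Variables (R : realType) (n : nat) (L : 'M[R]_n).
Let B := mx_supper L - mx_slower L.

Lemma mx_supper_diag : is_diag_mx L -> mx_supper L = 0.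
Proof.
move=> /is_diag_mxP L0; apply/matrixP => p q; rewrite !mxE.
by case: ifP => // lt_pq; rewrite L0 // neq_ltn lt_pq.
Qed.

Lemma mx_slower_diag : is_diag_mx L -> mx_slower L = 0.
Proof.
move=> /is_diag_mxP L0; apply/matrixP => p q; rewrite !mxE.
by case: ifP => // lt_qp; rewrite L0 // neq_ltn lt_qp orbT.
Qed.

Hypothesis symL : L^T = L.

Lemma toda_bracket_diag_entry (p : 'I_n) :
  (B *m L - L *m B) p p =
  (\sum_(q : 'I_n | (p < q)%N) L p q ^+ 2 - \sum_(q : 'I_n | (q < p)%N) L p q ^+ 2) *+ 2.
Proof.
have symLE q : L q p = L p q by rewrite -[in LHS]symL mxE.
rewrite !mxE -sumrB (big_mkcond (fun q : 'I_n => (p < q)%N)).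
rewrite (big_mkcond (fun q : 'I_n => (q < p)%N)) -sumrB -sumrMnl.
apply: eq_bigr => q _.
by rewrite /B !mxE symLE; case: ltngtP => _; ring.
Qed.

Lemma toda_commute_diag : B *m L = L *m B -> is_diag_mx L.
Proof.
move=> commBL; have symLE p q : L q p = L p q by rewrite -[in LHS]symL mxE.
have balanced (p : 'I_n) :
    \sum_(q : 'I_n | (p < q)%N) L p q ^+ 2 = \sum_(q : 'I_n | (q < p)%N) L p q ^+ 2.
  have /eqP := toda_bracket_diag_entry p; rewrite commBL subrr mxE eq_sym.
  by rewrite mulrn_eq0 /= subr_eq0 => /eqP.
suff upper0 m (p : 'I_n) : val p = m -> forall q : 'I_n, (p < q)%N -> L p q = 0.
  apply/is_diag_mxP => p q; rewrite neq_ltn => /orP [/(upper0 _ p erefl)//|lt_qp].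
  by rewrite -symLE (upper0 _ q erefl).
elim/ltn_ind: m p => m IH p val_p q lt_pq.
have lower0 : \sum_(q : 'I_n | (q < p)%N) L p q ^+ 2 = 0.
  by apply: big1 => r lt_rp; rewrite -symLE (IH r) ?expr0n // -val_p.
have /eqP := psumr_eq0P (fun r _ => sqr_ge0 (L p r)) (etrans (balanced p) lower0) lt_pq.
by rewrite sqrf_eq0 => /eqP.
Qed.

End TodaBracket.

Lemma ltn_homo_ord_inj (d : Order.disp_t) (T : porderType d) (k : nat) (f : 'I_k -> T) :
  (forall a b : 'I_k, (a < b)%N -> (f a < f b)%O) -> injective f.
Proof.
move=> incr a b eq_f; apply/val_inj/eqP; apply: contraT; rewrite neq_ltn.
by case/orP => /incr; rewrite eq_f ltxx.
Qed.

Section FlagZeros.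
Variables (R : realType) (n k : nat) (i : 'I_k -> nat) (lam : 'I_k -> R).
Hypothesis size_labels : size (block_labels i) = n.
Hypothesis lam_incr : forall j1 j2 : 'I_k, (j1 < j2)%N -> lam j1 < lam j2.

Let lam_inj : injective lam := ltn_homo_ord_inj lam_incr.
Let blk := block_of size_labels.

Lemma block_diag_commuteP (X : 'M[R]_n) :
  LambdaI n i lam *m X = X *m LambdaI n i lam <-> block_diag i X.
Proof. by rewrite (block_diagE size_labels) LambdaI_block_of; exact: diag_tau_commuteP. Qed.

Lemma xi_zero_diagP (Psi : 'M[R]_n) : is_SO Psi ->
  xi_zero i lam Psi <-> is_diag_mx (Psi *m LambdaI n i lam *m invmx Psi).
Proof.
move=> SOPsi; have [orthPsi _] := SOPsi; have orthPsiT := mulmx1C orthPsi.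
rewrite /xi_zero /toda_field (SO_invmx SOPsi).
set Lam := LambdaI n i lam; set L := Psi *m Lam *m Psi^T.
split=> [[X [[_ /block_diag_commuteP commX] fieldE]] | diagL].
  have BE : mx_supper L - mx_slower L = Psi *m X *m Psi^T.
    by rewrite -fieldE -mulmxA orthPsi mulmx1.
  apply: toda_commute_diag; first by rewrite !trmx_mul trmxK /Lam /LambdaI tr_diag_mx mulmxA.
  rewrite BE /L !mulmxA -[_ *m X *m Psi^T *m Psi]mulmxA orthPsiT mulmx1.
  rewrite -[Psi *m X *m Lam]mulmxA -commX -[_ *m Lam *m Psi^T *m Psi]mulmxA.
  by rewrite orthPsiT mulmx1 !mulmxA.
exists 0; split; first by split; [rewrite trmx0 oppr0 | move=> p q _; rewrite mxE].
by rewrite mx_supper_diag // mx_slower_diag // subrr mul0mx mulmx0.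
Qed.

Lemma SnI_conj_LambdaI (tau : {ffun 'I_n -> 'I_k}) : is_SnI i tau ->
  exists Psi : 'M[R]_n, is_SO Psi /\ Psi *m LambdaI n i lam *m invmx Psi = diag_tau lam tau.
Proof.
case=> _ card_tau; have [s tauE] : exists s : 'S_n, forall p, tau p = blk (s p).
  by apply: perm_of_card_fibres => j; rewrite card_tau card_block_of.
have [Psi [SOPsi conjE]] := SO_conj_diag_perm s (\row_p lam (blk p)).
exists Psi; split; rewrite // (SO_invmx SOPsi) LambdaI_block_of conjE.
by congr diag_mx; apply/rowP => p; rewrite !mxE tauE.
Qed.

Lemma conj_LambdaI_same_coset (Psi Psi' : 'M[R]_n) : is_SO Psi -> is_SO Psi' ->
  Psi *m LambdaI n i lam *m invmx Psi = Psi' *m LambdaI n i lam *m invmx Psi' ->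
  same_coset i Psi Psi'.
Proof.
move=> SOPsi SOPsi'; rewrite /same_coset !SO_invmx // => conjE.
split; first exact/SO_mul/SOPsi'/SO_trmx.
apply/block_diag_commuteP; have [orthPsi _] := SOPsi; have [orthPsi' _] := SOPsi'.
have := congr1 (fun M => Psi^T *m M *m Psi') conjE.
by rewrite !mulmxA (mulmx1C orthPsi) mul1mx -!mulmxA (mulmx1C orthPsi') mulmx1.
Qed.

Lemma diag_conj_LambdaI_SnI_unique (Psi : 'M[R]_n) :
  (forall j : 'I_k, (0 < i j)%N) -> is_SO Psi ->
  is_diag_mx (Psi *m LambdaI n i lam *m invmx Psi) ->
  exists! tau : {ffun 'I_n -> 'I_k},
    is_SnI i tau /\ Psi *m LambdaI n i lam *m invmx Psi = diag_tau lam tau.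
Proof.
move=> i_gt0 SOPsi; have [orthPsi _] := SOPsi.
rewrite (SO_invmx SOPsi) LambdaI_block_of => /diag_mxP [d conjE].
have [tau tauE] := diag_tau_conj_diag orthPsi conjE; rewrite tauE in conjE.
have card_tau j : #|[pred p | tau p == j]| = i j.
  by rewrite (card_fibre_conj_diag_tau lam_inj j orthPsi conjE) card_block_of.
exists tau; split=> [|tau' [_ conjE']]; last by apply: (diag_tau_inj lam_inj); rewrite -conjE'.
split=> //; split=> // j; have := i_gt0 j; rewrite -card_tau => /card_gt0P [p].
by rewrite inE => /eqP; exists p.
Qed.

End FlagZeros.

Theorem proposition4p1 (R : realType) (n k : nat) (i : 'I_k -> nat)
  (lam : 'I_k -> R) :
  (forall j : 'I_k, (0 < i j)%N) ->
  (\sum_(j < k) i j)%N = n ->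
  (forall j1 j2 : 'I_k, (j1 < j2)%N -> lam j1 < lam j2) ->
  [/\ (* zeros of xi_I are exactly the cosets with Psi Lambda Psi^-1 diagonal *)
      forall Psi : 'M[R]_n, is_SO Psi ->
        (xi_zero i lam Psi <->
         is_diag_mx (Psi *m LambdaI n i lam *m invmx Psi)),
      (* every tau in S_n^I is realized by some coset *)
      forall tau : {ffun 'I_n -> 'I_k}, is_SnI i tau ->
        exists Psi : 'M[R]_n, is_SO Psi /\
          Psi *m LambdaI n i lam *m invmx Psi = diag_tau lam tau,
      (* ... by exactly one coset *)
      forall (tau : {ffun 'I_n -> 'I_k}) (Psi Psi' : 'M[R]_n),
        is_SnI i tau -> is_SO Psi -> is_SO Psi' ->
        Psi *m LambdaI n i lam *m invmx Psi = diag_tau lam tau ->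
        Psi' *m LambdaI n i lam *m invmx Psi' = diag_tau lam tau ->
        same_coset i Psi Psi' &
      (* and every zero corresponds to exactly one tau in S_n^I *)
      forall Psi : 'M[R]_n, is_SO Psi -> xi_zero i lam Psi ->
        exists! tau : {ffun 'I_n -> 'I_k}, is_SnI i tau /\
          Psi *m LambdaI n i lam *m invmx Psi = diag_tau lam tau].
Proof.
move=> i_gt0 sum_i lam_incr.
have size_labels : size (block_labels i) = n by rewrite size_block_labels.
split.
- exact: xi_zero_diagP.
- exact: SnI_conj_LambdaI.
- move=> tau Psi Psi' _ SOPsi SOPsi' conjE conjE'.
  apply: (conj_LambdaI_same_coset size_labels lam_incr SOPsi SOPsi').
  by rewrite conjE conjE'.
- move=> Psi SOPsi /(xi_zero_diagP size_labels lam_incr SOPsi).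
  exact: diag_conj_LambdaI_SnI_unique.
Qed.
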